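(* There are only finitely many (up to isomorphism) finite simple graphs $G$ with chromatic number $\chi(G)=3$ whose adjacency matrix is non-singular and which satisfy $\mathcal{E}(G)<n-1+\bar d$, where $n$ is the order of $G$.
   Context: For a finite simple graph $G$ with $n$ vertices and $m$ edges, $A(G)$ is its adjacency matrix with eigenvalues $\lambda_1\ge\cdots\ge\lambda_n$, and the energy is $\mathcal{E}(G)=\sum_{i=1}^n|\lambda_i|$. $\bar d=2m/n$ is the average degree. *)

From HB Require Import structures.
From mathcomp Require Import all_boot all_order all_algebra all_field.
Set Implicit Arguments. Unset Strict Implicit. Unset Printing Implicit Defensive.
Import Order.TTheory GRing.Theory Num.Theory.
Local Open Scope ring_scope.

Definition simple_graph (n : nat) (e : rel 'I_n) : Prop :=
  symmetric e /\ irreflexive e.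

Definition adj_mx (n : nat) (e : rel 'I_n) : 'M[algC]_n :=
  \matrix_(i, j) (e i j)%:R.

(* Eigenvalues of A(G), with multiplicity: the roots of its characteristic
   polynomial over the algebraically closed field algC (the polynomial is
   monic, so it equals \prod_(z <- eigenvalues) ('X - z)). *)
Definition adj_eigenvalues (n : nat) (e : rel 'I_n) : seq algC :=
  sval (closed_field_poly_normal (char_poly (adj_mx e))).

Definition energy (n : nat) (e : rel 'I_n) : algC :=
  \sum_(z <- adj_eigenvalues e) `|z|.

Definition num_edges (n : nat) (e : rel 'I_n) : nat :=
  #|[set p : 'I_n * 'I_n | (p.1 < p.2)%N && e p.1 p.2]|.

Definition avg_degree (n : nat) (e : rel 'I_n) : algC :=
  (2 * num_edges e)%:R / n%:R.

Definition colorable (n : nat) (e : rel 'I_n) (k : nat) : Prop :=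
  exists f : 'I_n -> 'I_k, forall x y, e x y -> f x != f y.

Definition chromatic_number_is (n : nat) (e : rel 'I_n) (k : nat) : Prop :=
  colorable e k /\ forall j, (j < k)%N -> ~ colorable e j.

Definition graph_iso (n m : nat) (e : rel 'I_n) (e' : rel 'I_m) : Prop :=
  exists f : 'I_n -> 'I_m, bijective f /\ forall x y, e x y = e' (f x) (f y).

From HB Require Import structures.
From mathcomp Require Import all_boot all_order all_algebra all_field.
From mathcomp Require Import zify ring.
Set Implicit Arguments. Unset Strict Implicit. Unset Printing Implicit Defensive.
Import Order.TTheory GRing.Theory Num.Theory.
Local Open Scope ring_scope.

(* Write lambda_i for the eigenvalues of A(G), which are real and, since A(G) is
   non-singular, nonzero, and put y_i = sqrt |lambda_i|.  Then
   sum y_i^2 = E(G), sum y_i^4 = sum lambda_i^2 = tr A^2 = 2m, and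
   prod y_i^2 = |det A| >= 1 because det A is a nonzero integer, so AM-GM gives
   sum y_i >= n.  A proper 3-colouring has colour classes of sizes a_c with
   2m <= n^2 - sum a_c^2 <= 2n^2/3, so every y_i^4 <= 2n^2/3; for n >= 156 this
   forces y_i^2 + 2 y_i + 3 <= n.  Under that constraint
   (y - 1)^2 (n - y^2 - 2y - 3) >= 0 reads 2(n-2) y + y^4 <= n y^2 + n - 3;
   summing over i and using sum y_i >= n gives n E(G) >= n(n-1) + 2m, that is
   E(G) >= n - 1 + 2m/n.  So all graphs in question have fewer than 156
   vertices, and there are finitely many of those. *)

Lemma char_poly_conj (R : comUnitRingType) n (P A : 'M[R]_n) : P \in unitmx ->
  char_poly (invmx P *m A *m P) = char_poly A.
Proof.
move=> Pu; rewrite /char_poly /char_poly_mx !map_mxM.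
set Q' := map_mx polyC (invmx P); set P' := map_mx polyC P; set A' := map_mx _ A.
have QP : Q' *m P' = 1%:M by rewrite -map_mxM mulVmx // map_mx1.
have QXP : Q' *m 'X%:M *m P' = 'X%:M.
  by rewrite -mulmxA -scalar_mxC mulmxA QP mul1mx.
have -> : 'X%:M - Q' *m A' *m P' = Q' *m ('X%:M - A') *m P'.
  by rewrite mulmxBr mulmxBl QXP.
by rewrite !det_mulmx mulrC mulrA -det_mulmx (mulmx1C QP) det1 mul1r.
Qed.

Section NormalSpectrum.
Variables (C : numClosedFieldType) (n : nat) (A : 'M[C]_n).
Let d := spectral_diag A.
Hypothesis A_normal : A \is normalmx.

Lemma char_poly_normalmx : char_poly A = \prod_i ('X - (d 0 i)%:P).
Proof.
rewrite {1}(orthomx_spectralP A_normal) char_poly_conj ?spectral_unit //.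
rewrite char_poly_trig ?diag_mx_is_trig //.
by apply: eq_bigr => i _; rewrite mxE eqxx mulr1n.
Qed.

Lemma det_normalmx : \det A = \prod_i d 0 i.
Proof.
rewrite {1}(orthomx_spectralP A_normal) !det_mulmx det_diag mulrC mulrA.
by rewrite -det_mulmx mulmxV ?spectral_unit // det1 mul1r.
Qed.

End NormalSpectrum.

Lemma hermitian_mxtrace_sqr (C : numClosedFieldType) n (A : 'M[C]_n) :
  A \is hermsymmx -> \tr (A *m A) = \sum_i `|spectral_diag A 0 i| ^+ 2.
Proof.
move=> Aherm; have d_real := hermitian_spectral_diag_real Aherm.
have Pu := spectral_unit A.
rewrite {1 2}(orthomx_spectralP (hermitian_normalmx Aherm)).
rewrite !mulmxA mulmxK // mxtrace_mulC !mulmxA mulmxV // mul1mx mulmx_diag.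
rewrite mxtrace_diag; apply: eq_bigr => i _.
by rewrite mxE real_normK ?expr2 //; move/mxOverP: d_real; apply.
Qed.

Section AdjacencySpectrum.
Variables (n : nat) (e : rel 'I_n).
Hypothesis e_sym : symmetric e.
Let d := spectral_diag (adj_mx e).

Lemma adj_mx_hermsym : adj_mx e \is hermsymmx.
Proof.
apply: realsym_hermsym; last by apply/mxOverP => i j; rewrite mxE realn.
by apply/is_hermitianmxP; apply/matrixP => i j; rewrite !mxE expr0 mul1r e_sym.
Qed.

Let adj_normal := hermitian_normalmx adj_mx_hermsym.

Lemma adj_eigenvalues_spectral :
  perm_eq (adj_eigenvalues e) [seq d 0 i | i <- enum 'I_n].
Proof.
apply: prod_XsubC_eq; rewrite big_map big_enum /= -(char_poly_normalmx adj_normal).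
rewrite /adj_eigenvalues; case: closed_field_poly_normal => s /= ->.
by have /monicP -> := char_poly_monic (adj_mx e); rewrite scale1r.
Qed.

Lemma energy_spectral : energy e = \sum_i `|d 0 i|.
Proof. by rewrite /energy (perm_big _ adj_eigenvalues_spectral) big_map big_enum. Qed.

Lemma det_adj_mx_spectral : \det (adj_mx e) = \prod_i d 0 i.
Proof. exact: det_normalmx adj_normal. Qed.

Lemma sum_sqr_adj_spectral : \sum_i `|d 0 i| ^+ 2 = (\sum_i \sum_j e i j)%:R.
Proof.
rewrite -hermitian_mxtrace_sqr ?adj_mx_hermsym // natr_sum; apply: eq_bigr => i _.
rewrite !mxE natr_sum; apply: eq_bigr => j _.
by rewrite !mxE (e_sym j i); case: (e i j); rewrite ?mulr1 ?mulr0.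
Qed.

End AdjacencySpectrum.

Lemma det_adj_mx_int n (e : rel 'I_n) : \det (adj_mx e) \is a Num.int.
Proof.
apply: rpred_sum => s _; apply: rpredM; first by rewrite rpredX ?rpredN ?rpred1.
by apply: rpred_prod => i _; rewrite mxE rpred_nat.
Qed.

Section Counting.
Local Open Scope nat_scope.

Lemma sqr_sum_leq_card_sum_sqr (I : finType) (a : I -> nat) :
  (\sum_i a i) ^ 2 <= #|I| * \sum_i a i ^ 2.
Proof.
have sqr_sum : (\sum_i a i) ^ 2 = \sum_i \sum_j a i * a j.
  by rewrite -mulnn big_distrl /=; apply: eq_bigr => i _; rewrite big_distrr.
have sum_sqr2 : \sum_i \sum_j (a i ^ 2 + a j ^ 2) = 2 * (#|I| * \sum_i a i ^ 2).
  under eq_bigr do rewrite big_split sum_nat_const /=.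
  rewrite big_split /= -big_distrr /= exchange_big /=.
  under [in X in _ + X]eq_bigr do rewrite sum_nat_const.
  by rewrite -big_distrr [RHS]mul2n -addnn.
rewrite -(leq_pmul2l (isT : 0 < 2)) sqr_sum -sum_sqr2 big_distrr /= leq_sum // => i _.
by rewrite big_distrr /= leq_sum // => j _; apply: nat_Cauchy.
Qed.

Lemma sum_adj_num_edges n (e : rel 'I_n) : simple_graph e ->
  \sum_i \sum_j e i j = 2 * num_edges e.
Proof.
move=> [e_sym e_irr].
have split_lt (p : 'I_n * 'I_n) :
    e p.1 p.2 = ((p.1 < p.2) && e p.1 p.2) + ((p.2 < p.1) && e p.1 p.2) :> nat.
  by case: p => i j /=; case: ltngtP => [||/val_inj->]; rewrite ?e_irr ?addn0.
have swap_inj : injective (fun p : 'I_n * 'I_n => (p.2, p.1)).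
  by move=> [? ?] [? ?] [-> ->].
rewrite pair_bigA /= (eq_bigr _ (fun p _ => split_lt p)) big_split /=.
rewrite [X in _ + X](reindex_inj swap_inj) /=.
under [X in _ + X]eq_bigr do rewrite e_sym.
rewrite addnn -mul2n /num_edges -sum1_card; congr (2 * _).
by rewrite [RHS]big_mkcond; apply: eq_bigr => p _; rewrite inE; case: (_ && _).
Qed.

Lemma colorable_sum_adj_leq n (e : rel 'I_n) k : colorable e k ->
  k * \sum_i \sum_j e i j <= k.-1 * n ^ 2.
Proof.
move=> [f f_proper].
pose a c := \sum_i (f i == c : nat).
have sum_a : \sum_c a c = n.
  rewrite exchange_big /= -[RHS]card_ord -sum1_card; apply: eq_bigr => i _.
  rewrite (bigD1 (f i)) //= eqxx big1 // => c.
  by rewrite eq_sym => /negbTE ->.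
have same_color : \sum_i \sum_j (f i == f j : nat) = \sum_c a c ^ 2.
  transitivity (\sum_c \sum_i \sum_j ((f i == c) * (f j == c))).
    rewrite [RHS]exchange_big; apply: eq_bigr => i _.
    rewrite [RHS]exchange_big; apply: eq_bigr => j _ /=.
    rewrite (bigD1 (f i)) //= eqxx mul1n big1 ?addn0 1?eq_sym // => c.
    by rewrite eq_sym => /negbTE ->.
  apply: eq_bigr => c _; rewrite -mulnn big_distrl; apply: eq_bigr => i _.
  by rewrite big_distrr.
have adj_color : \sum_i \sum_j e i j + \sum_i \sum_j (f i == f j : nat) <= n ^ 2.
  have -> : n ^ 2 = \sum_(i < n) n by rewrite sum_nat_const card_ord mulnn.
  rewrite -big_split leq_sum // => i _.
  rewrite -big_split /= -[X in _ <= X]card_ord -sum1_card leq_sum // => j _.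
  by case E: (e i j); rewrite ?(negbTE (f_proper _ _ E)) //; case: (_ == _).
have := sqr_sum_leq_card_sum_sqr a; rewrite card_ord sum_a -same_color => CS.
rewrite -subn1 mulnBl mul1n.
have := leq_mul (leqnn k) adj_color; rewrite mulnDr; lia.
Qed.
End Counting.

Section RealInequalities.
Variable R : numDomainType.
Implicit Types (y N : R).

Lemma card_le_sum_of_prod_ge1 (I : finType) (y : I -> R) :
  (forall i, 0 <= y i) -> 1 <= \prod_i y i -> #|I|%:R <= \sum_i y i.
Proof.
move=> y_ge0 prod_ge1; have [I0 | I_gt0] := posnP #|I|.
  by rewrite I0 sumr_ge0.
have AGM := leif_AGM_scaled (A := predT) (fun i _ => mulrn_wge0 #|I| (y_ge0 i)).
rewrite -(ler_pXn2r I_gt0) ?nnegrE ?ler0n ?sumr_ge0 //; apply: le_trans AGM.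
by rewrite prodrMn_const -natrX ler_wMn2r.
Qed.

Lemma quartic_le_of_sqr_add_le y N : 0 <= y -> y ^+ 2 + 2 * y + 3 <= N ->
  2 * (N - 2) * y + y ^+ 4 <= N * y ^+ 2 + (N - 3).
Proof.
move=> y_ge0 small_y; rewrite -subr_ge0.
have -> : N * y ^+ 2 + (N - 3) - (2 * (N - 2) * y + y ^+ 4)
    = (y - 1) ^+ 2 * (N - (y ^+ 2 + 2 * y + 3)) by ring.
by rewrite mulr_ge0 ?subr_ge0 // -realEsqr rpredB ?ger0_real.
Qed.

Lemma sqr_add_le_of_quartic_le y N : 0 <= y -> 156 <= N ->
  3 * y ^+ 4 <= 2 * N ^+ 2 -> y ^+ 2 + 2 * y + 3 <= N.
Proof.
move=> y_ge0 N_large y4_le.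
have N_ge0 : 0 <= N by apply: le_trans N_large.
have y2_le : 6 * y ^+ 2 <= 5 * N.
  rewrite -ler_sqr ?nnegrE ?mulr_ge0 ?sqr_ge0 //.
  rewrite -subr_ge0 (_ : _ - _ = N ^+ 2 + 12 * (2 * N ^+ 2 - 3 * y ^+ 4)); last by ring.
  by rewrite addr_ge0 ?sqr_ge0 ?mulr_ge0 ?subr_ge0.
have y_le : 20 * y <= y ^+ 2 + 100.
  rewrite -subr_ge0 (_ : _ - _ = (y - 10) ^+ 2); last by ring.
  by rewrite -realEsqr rpredB ?ger0_real.
rewrite -subr_ge0 -(pmulr_rge0 _ (ltr0n R 60)).
rewrite (_ : _ * _ = 11 * (5 * N - 6 * y ^+ 2) + 6 * (y ^+ 2 + 100 - 20 * y)
                     + (5 * N - 780)); last by ring.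
have N5_large : 780 <= 5 * N.
  by rewrite (_ : 780 = 5 * 156) ?ler_pM2l ?ltr0n // -natrM.
rewrite addr_ge0 ?subr_ge0 // addr_ge0 // mulr_ge0 ?subr_ge0 //.
Qed.

Lemma sum_quartic_le_of_prod_ge1 (I : finType) (y : I -> R) (N := #|I|%:R) :
    (forall i, 0 <= y i) -> 1 <= \prod_i y i ->
    (forall i, y i ^+ 2 + 2 * y i + 3 <= N) ->
  N * (N - 1) + \sum_i y i ^+ 4 <= N * \sum_i y i ^+ 2.
Proof.
move=> y_ge0 prod_ge1 small_y.
have sum_bound : 2 * (N - 2) * \sum_i y i + \sum_i y i ^+ 4
                 <= N * \sum_i y i ^+ 2 + N * (N - 3).
  have : \sum_i (2 * (N - 2) * y i + y i ^+ 4) <= \sum_i (N * y i ^+ 2 + (N - 3)).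
    by apply: ler_sum => i _; exact: quartic_le_of_sqr_add_le (y_ge0 i) (small_y i).
  rewrite big_split [X in _ <= X]big_split /= -!mulr_sumr sumr_const.
  by rewrite -[(N - 3) *+ _]mulr_natr [N * (N - 3)]mulrC.
have slack : 0 <= 2 * (N - 2) * (\sum_i y i - N).
  have [I0 | /card_gt0P [i0 _]] := posnP #|I|; last first.
    rewrite !mulr_ge0 ?ler0n ?subr_ge0 ?card_le_sum_of_prod_ge1 //.
    apply: le_trans (_ : 2 <= 3) (le_trans _ (small_y i0)); rewrite ?ler_nat //.
    by rewrite lerDr addr_ge0 ?mulr_ge0 ?exprn_ge0.
  by rewrite /N I0 big_pred0 ?subrr ?mulr0 // => i; rewrite -[RHS](card0_eq I0 i).
rewrite -subr_ge0; rewrite -subr_ge0 in sum_bound.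
by have := addr_ge0 sum_bound slack; congr (_ <= _); ring.
Qed.

End RealInequalities.

Lemma energy_lower_bound n (e : rel 'I_n) : (156 <= n)%N -> simple_graph e ->
  colorable e 3 -> \det (adj_mx e) != 0 -> n%:R - 1 + avg_degree e <= energy e.
Proof.
move=> n_large e_simple col3 det_neq0; have e_sym := e_simple.1.
pose y i := sqrtC `|spectral_diag (adj_mx e) 0 i|.
have y_ge0 i : 0 <= y i by rewrite sqrtC_ge0.
have y_sqr i : y i ^+ 2 = `|spectral_diag (adj_mx e) 0 i| by rewrite sqrtCK.
have prod_ge1 : 1 <= \prod_i y i.
  rewrite -(ler_pXn2r (isT : 0 < 2)%N) ?nnegrE ?prodr_ge0 // expr1n -prodrXl.
  under eq_bigr do rewrite y_sqr.
  by rewrite -normr_prod -det_adj_mx_spectral // norm_intr_ge1 ?det_adj_mx_int.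
have sum_y4 : \sum_i y i ^+ 4 = (2 * num_edges e)%:R.
  under eq_bigr do rewrite -[4%N]/(2 * 2)%N exprM y_sqr.
  by rewrite sum_sqr_adj_spectral // sum_adj_num_edges.
have sum_y2 : \sum_i y i ^+ 2 = energy e.
  by under eq_bigr do rewrite y_sqr; rewrite energy_spectral.
have small_y i : y i ^+ 2 + 2 * y i + 3 <= n%:R.
  apply: sqr_add_le_of_quartic_le; rewrite ?ler_nat //.
  apply: le_trans (_ : 3 * \sum_j y j ^+ 4 <= _).
    rewrite ler_wpM2l ?ler0n // (bigD1 i) //= lerDl sumr_ge0 // => j _.
    exact: exprn_ge0.
  have := colorable_sum_adj_leq col3; rewrite sum_adj_num_edges // => edge_bound.
  by rewrite sum_y4 -natrX -!natrM ler_nat.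
have := sum_quartic_le_of_prod_ge1 y_ge0 prod_ge1.
rewrite card_ord sum_y4 sum_y2 => /(_ small_y) energy_bound.
have n_gt0 : (0 < n%:R :> algC) by rewrite ltr0n; apply: leq_trans n_large.
by rewrite -(ler_pM2l n_gt0) mulrDr /avg_degree mulrCA divff ?mulr1 ?gt_eqF.
Qed.

Lemma small_graphs_finite (N : nat) :
  exists (k : nat) (ns : 'I_k -> nat) (gs : forall i : 'I_k, rel 'I_(ns i)),
    forall n (e : rel 'I_n), (n < N)%N -> exists i : 'I_k, graph_iso e (gs i).
Proof.
pose T := {m : 'I_N & {ffun 'I_m * 'I_m -> bool}}.
exists #|{: T}|, (fun i => tag (enum_val i : T)).
exists (fun i x y => tagged (enum_val i : T) (x, y)) => n e n_small.
exists (enum_rank (@Tagged _ (Ordinal n_small) (fun m : 'I_N => {ffun 'I_m * 'I_m -> bool})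
          [ffun p : 'I_n * 'I_n => e p.1 p.2])).
rewrite enum_rankK /=; exists id; split; first by exists id.
by move=> x y; rewrite ffunE.
Qed.

Theorem theorem3p4 :
  exists (k : nat) (ns : 'I_k -> nat) (gs : forall i : 'I_k, rel 'I_(ns i)),
    forall (n : nat) (e : rel 'I_n),
      simple_graph e ->
      chromatic_number_is e 3 ->
      \det (adj_mx e) != 0 ->
      energy e < n%:R - 1 + avg_degree e ->
      exists i : 'I_k, graph_iso e (gs i).
Proof.
have [k [ns [gs small_iso]]] := small_graphs_finite 156.
exists k, ns, gs => n e e_simple [col3 _] det_neq0 low_energy.
apply: small_iso; rewrite ltnNge; apply/negP => n_large.
by have := energy_lower_bound n_large e_simple col3 det_neq0; rewrite lt_geF.
Qed.
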